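(* Let $\beta \in \mathbb{C}\setminus\mathbb{R}$ be a root of a quadratic polynomial with integer coefficients. Then there is a nonzero polynomial $f \in \mathbb{Z}_{\geq 0}[x]$ with $f(\beta) = 0$; consequently $p_\beta(0) = \infty$, and $p_\beta(\alpha) \in \{0, \infty\}$ for every $\alpha \in \mathbb{C}$.
   Context: For $\beta, \alpha \in \mathbb{C}$, $p_\beta(\alpha) \in \mathbb{Z}_{\geq 0}\cup\{\infty\}$ is the number of polynomials $f \in \mathbb{Z}_{\geq 0}[x]$ (non-negative integer coefficients) with $f(\beta) = \alpha$. *)

From mathcomp Require Import all_boot all_algebra.
From mathcomp Require Import all_classical all_reals.
From mathcomp Require Import complex.
From mathcomp Require Import Rstruct.
From mathcomp Require Import finmap.
Set Implicit Arguments. Unset Strict Implicit. Unset Printing Implicit Defensive.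
Import GRing.Theory Num.Theory.
Local Open Scope ring_scope.

Definition C : numClosedFieldType := (Rdefinitions.R)[i].

Definition nonneg_poly (f : {poly int}) : Prop := forall i : nat, 0 <= f`_i.

Definition evalC (f : {poly int}) (x : C) : C := (map_poly intr f).[x].

Definition pset (beta alpha : C) : set {poly int} :=
  [set f | nonneg_poly f /\ evalC f beta = alpha].

(* p_beta(alpha) in Z_{>=0} u {oo}: Some n = finite value n, None = infinity. *)
Definition p_beta (beta alpha : C) : option nat :=
  if pselect (finite_set (pset beta alpha))
  then Some (#|` fset_set (pset beta alpha)|)%fset
  else None.

From mathcomp Require Import all_boot all_order all_algebra.
From mathcomp Require Import all_classical all_reals.
From mathcomp Require Import complex.
From mathcomp Require Import Rstruct.
From mathcomp Require Import ring lra zify.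
Set Implicit Arguments. Unset Strict Implicit. Unset Printing Implicit Defensive.
Import Order.TTheory GRing.Theory Num.Theory.
Local Open Scope ring_scope.

(* Write a z^2 + b z + c = 0 with a > 0; as z is not real, conj z is the other
   root, so b = -a (z + conj z) and c = a z conj z >= 0.  While Re z^2 > 0,
   squaring at least doubles sin^2 (arg z), so some power z^n has Re z^n <= 0.
   Then a^n (X^n - z^n) (X^n - conj z^n) kills z and has nonnegative integer
   coefficients (integrality of a^n (z^n + conj z^n) follows from the linear
   recurrence it satisfies), and adding its multiples by X^k to one solution
   of f(z) = alpha gives infinitely many. *)

Section SquaredSine.
Variable R : rcfType.
Implicit Types z : R[i].

Definition sin2arg z : R :=
  complex.Im z ^+ 2 / (complex.Re z ^+ 2 + complex.Im z ^+ 2).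

Lemma sin2arg_le1 z : sin2arg z <= 1.
Proof.
rewrite /sin2arg; set r := _ + _; have [->|r_neq0] := eqVneq r 0.
  by rewrite invr0 mulr0.
have r_gt0 : 0 < r by rewrite lt0r r_neq0 addr_ge0 ?sqr_ge0.
by rewrite ler_pdivrMr // mul1r lerDr sqr_ge0.
Qed.

Lemma sin2arg_gt0 z : z \isn't Num.real -> 0 < sin2arg z.
Proof.
case: z => x y; rewrite complex_real /sin2arg /= => y_neq0.
have y2_gt0 : 0 < y ^+ 2 by rewrite exprn_even_gt0.
by rewrite divr_gt0 // ltr_pwDr ?sqr_ge0.
Qed.

Lemma sin2arg_sqr z : 0 < complex.Re (z ^+ 2) -> 2 * sin2arg z <= sin2arg (z ^+ 2).
Proof.
case: z => x y; rewrite expr2 /sin2arg /= => re_gt0.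
set r := x ^+ 2 + y ^+ 2.
have r_gt0 : 0 < r by rewrite /r; have := sqr_ge0 y; nra.
have -> : (x * x - y * y) ^+ 2 + (x * y + y * x) ^+ 2 = r ^+ 2 by rewrite /r; ring.
rewrite ler_pdivlMr ?exprn_gt0 //.
have -> : 2 * (y ^+ 2 / r) * r ^+ 2 = 2 * y ^+ 2 * r by field; rewrite gt_eqF.
(* double-angle formula: sin^2 2t - 2 sin^2 t = 2 sin^2 t cos 2t *)
rewrite -subr_ge0.
have -> : (x * y + y * x) ^+ 2 - 2 * y ^+ 2 * r = 2 * y ^+ 2 * (x * x - y * y).
  by rewrite /r; ring.
by rewrite mulr_ge0 ?(ltW re_gt0) // mulr_ge0 ?sqr_ge0.
Qed.

End SquaredSine.

Lemma exists_Re_exp_le0 (R : archiRcfType) (z : R[i]) :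
  z \isn't Num.real -> exists2 n, (0 < n)%N & complex.Re (z ^+ n) <= 0.
Proof.
move=> z_nreal; apply: contrapT => no_n.
have Re_gt0 n : (0 < n)%N -> 0 < complex.Re (z ^+ n).
  by move=> n_gt0; rewrite ltNge; apply/negP => Re_le0; apply: no_n; exists n.
have s_gt0 := sin2arg_gt0 z_nreal.
have sin2arg_exp2 k : (2 ^ k)%:R * sin2arg z <= sin2arg (z ^+ (2 ^ k)).
  elim: k => [|k IHk]; first by rewrite mul1r expr1.
  rewrite expnSr natrM mulrAC exprM; apply: le_trans (sin2arg_sqr _).
    by rewrite mulrC ler_pM2l.
  by rewrite -exprM Re_gt0 // muln_gt0 expn_gt0.
have /archi_boundP : 0 <= (sin2arg z)^-1 by rewrite invr_ge0 ltW.
set k := (X in _ < X%:R) => k_gt.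
have gt1 : 1 < (2 ^ k)%:R * sin2arg z.
  by rewrite -ltr_pdivrMr // div1r (lt_le_trans k_gt) // ler_nat ltnW // ltn_expl.
by have := le_trans (sin2arg_exp2 k) (sin2arg_le1 _); rewrite leNgt gt1.
Qed.

Section QuadraticRoot.
Variables (R : rcfType) (z : R[i]) (a b c : int).
Hypothesis z_nreal : z \isn't Num.real.
Hypothesis z_root : a%:~R * z ^+ 2 + b%:~R * z + c%:~R = 0.
Local Notation zc := (conjc z).

Lemma conjc_quadratic_root : a%:~R * zc ^+ 2 + b%:~R * zc + c%:~R = 0.
Proof.
have := congr1 conjc z_root; rewrite !rmorphD !rmorphM !rmorph_int rmorph0 => <-.
by rewrite expr2.
Qed.

Lemma vieta_sum : b%:~R = - (a%:~R * (z + zc)).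
Proof.
have z_neq_zc : z - zc != 0.
  by apply: contra z_nreal; rewrite subr_eq0 eq_sym => /eqP/CrealP.
have : (z - zc) * (a%:~R * (z + zc) + b%:~R) = 0.
  rewrite -[RHS](subrr 0) -{1}z_root -conjc_quadratic_root; ring.
by move/eqP; rewrite mulf_eq0 (negPf z_neq_zc) addrC addr_eq0 => /eqP.
Qed.

Lemma vieta_prod : c%:~R = a%:~R * (z * zc).
Proof. by rewrite -[LHS]subr0 -{1}z_root vieta_sum; ring. Qed.

Lemma scaled_power_sum_int n :
  exists u : int, u%:~R = a%:~R ^+ n * (z ^+ n + zc ^+ n).
Proof.
suff [u [_ [u_def _]]] : exists u v : int, u%:~R = a%:~R ^+ n * (z ^+ n + zc ^+ n) /\
    v%:~R = a%:~R ^+ n.+1 * (z ^+ n.+1 + zc ^+ n.+1) by exists u.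
elim: n => [|n [u [v [u_def v_def]]]].
  exists 2, (- b); split; first by rewrite !expr0 mul1r.
  by rewrite intrN vieta_sum opprK !expr1.
exists v, (- b * v - a * c * u); split => //.
by rewrite intrB !intrM intrN u_def v_def vieta_sum vieta_prod !exprS; ring.
Qed.

Lemma nonneg_annihilator_of_Re_exp_le0 n :
  0 < a -> (0 < n)%N -> complex.Re (z ^+ n) <= 0 ->
  exists f : {poly int}, [/\ f != 0, forall i, 0 <= f`_i & root (map_poly intr f) z].
Proof.
move=> a_gt0 n_gt0 Re_le0; have [u u_def] := scaled_power_sum_int n.
have u_le0 : u <= 0.
  rewrite -(lerz0 R[i]) u_def -[zc ^+ n]rmorphXn addcJ.
  apply: mulr_ge0_le0; first by rewrite exprn_ge0 // ler0z ltW.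
  by apply: mulr_ge0_le0; rewrite // -[0 : R[i]]/(0%:C)%C lecR.
have c_ge0 : 0 <= c.
  by rewrite -(ler0z R[i]) vieta_prod mulr_ge0 ?mulcJ_ge0 // ler0z ltW.
(* the polynomial a^n (X^n - z^n) (X^n - zc^n) *)
exists (a ^+ n *: 'X^(n + n) - u *: 'X^n + (c ^+ n)%:P); split.
- apply/eqP => /(congr1 (coefp (n + n))) /=.
  have [nn_neq_n nn_neq0] : (n + n != n) /\ (n + n != 0)%N by split; lia.
  rewrite !coefD coefN !coefZ !coefXn coefC coef0 eqxx.
  rewrite (negPf nn_neq_n) (negPf nn_neq0).
  by rewrite mulr1 mulr0 subr0 addr0 => /eqP; rewrite expf_eq0 gt_eqF ?andbF.
- move=> i; rewrite !coefD coefN !coefZ !coefXn coefC.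
  rewrite !addr_ge0 ?mulr_ge0 ?exprn_ge0 ?ler0n ?(ltW a_gt0) //.
  by rewrite oppr_ge0 mulr_le0_ge0 ?ler0n.
  by case: (i == 0)%N; rewrite ?exprn_ge0.
- rewrite /root !rmorphD rmorphN /= !map_polyZ !map_polyXn map_polyC /= !hornerE.
  by rewrite !rmorphXn /= u_def vieta_prod exprD !exprMn; apply/eqP; ring.
Qed.

End QuadraticRoot.

Lemma quadratic_root_pos_lead (R : numDomainType) (z : R) (q : {poly int}) :
  size q = 3%N -> root (map_poly intr q) z ->
  exists a b c : int, 0 < a /\ a%:~R * z ^+ 2 + b%:~R * z + c%:~R = 0.
Proof.
wlog q2_gt0 : q / 0 < q`_2 => [wlog_q q_size q_root | q_size /rootP].
  have : lead_coef q != 0 by rewrite lead_coef_eq0 -size_poly_eq0 q_size.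
  rewrite lead_coefE q_size /= => q2_neq0.
  have [q2_lt0|q2_ge0] := ltP (q`_2) 0.
    by apply: (wlog_q (- q)); rewrite ?coefN ?oppr_gt0 ?size_polyN ?raddfN ?rootN.
  by apply: (wlog_q q); rewrite // lt_def q2_neq0.
rewrite horner_coef (size_map_inj_poly (@intr_inj R)) // q_size.
rewrite !big_ord_recr big_ord0 /= !coef_map /= => q_root.
by exists q`_2, q`_1, q`_0; split => //; rewrite -q_root; ring.
Qed.

Lemma nonneg_annihilator_of_quadratic (R : archiRcfType) (z : R[i]) (q : {poly int}) :
  z \isn't Num.real -> size q = 3%N -> root (map_poly intr q) z ->
  exists f : {poly int}, [/\ f != 0, forall i, 0 <= f`_i & root (map_poly intr f) z].
Proof.
move=> z_nreal q_size q_root.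
have [a [b [c [a_gt0 z_root]]]] := quadratic_root_pos_lead q_size q_root.
have [n n_gt0 Re_le0] := exists_Re_exp_le0 z_nreal.
by apply: (nonneg_annihilator_of_Re_exp_le0 z_nreal z_root a_gt0 n_gt0).
Qed.

Lemma pset_infinite (beta alpha : C) (f g : {poly int}) :
  f != 0 -> nonneg_poly f -> evalC f beta = 0 ->
  pset beta alpha g -> infinite_set (pset beta alpha).
Proof.
move=> f_neq0 f_ge0 f_root [g_ge0 g_val] pset_fin.
pose shift k := g + f * 'X^k.
have shift_in k : pset beta alpha (shift k).
  split; first by move=> i; rewrite coefD coefMXn addr_ge0 //; case: ltnP.
  move: f_root g_val; rewrite /evalC rmorphD rmorphM /= map_polyXn !hornerE => -> ->.
  by rewrite mul0r addr0.
have shift_inj : injective shift.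
  move=> k m /addrI /(congr1 (fun p : {poly int} => size p)) /=.
  by rewrite !size_mulXn // => /addIn.
apply: infinite_nat; suff <- : (shift @^-1` pset beta alpha)%classic = setT.
  by apply: finite_preimage pset_fin => k m _ _ /shift_inj.
by apply/seteqP; split=> k // _; apply: shift_in.
Qed.

Lemma p_beta_infinite (beta alpha : C) :
  infinite_set (pset beta alpha) -> p_beta beta alpha = None.
Proof. by rewrite /p_beta; case: pselect. Qed.

Lemma p_beta_set0 (beta alpha : C) :
  pset beta alpha = set0 -> p_beta beta alpha = Some 0%N.
Proof.
rewrite /p_beta => ->; case: (pselect _) => [?|not_fin] /=.
  by rewrite fset_set0.
by case: not_fin; exact: finite_set0.
Qed.

Theorem proposition9 (beta : C)
  (hnr : beta \isn't Num.real)
  (hquad : exists q : {poly int}, size q = 3%N /\ root (map_poly intr q) beta) :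
  (exists f : {poly int}, f != 0 /\ nonneg_poly f /\ evalC f beta = 0)
  /\ p_beta beta 0 = None
  /\ (forall alpha : C, p_beta beta alpha = Some 0%N \/ p_beta beta alpha = None).
Proof.
have [q [q_size q_root]] := hquad.
have [f [f_neq0 f_ge0 /rootP f_root]] :=
  nonneg_annihilator_of_quadratic hnr q_size q_root.
have p_beta_oo alpha g : pset beta alpha g -> p_beta beta alpha = None.
  by move=> g_in; apply/p_beta_infinite/(pset_infinite f_neq0 f_ge0 f_root g_in).
split; first by exists f.
split.
  apply: (p_beta_oo _ 0); split; first by move=> i; rewrite coef0.
  by rewrite /evalC rmorph0 horner0.
move=> alpha; have [[g g_in]|no_g] := pselect (exists g, pset beta alpha g).
  by right; apply: p_beta_oo g_in.
by left; apply/p_beta_set0/seteqP; split => // g g_in; apply: no_g; exists g.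
Qed.
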